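(* Let $F$ be a function from the pure states of $\mathcal{H}'$ to $[0,\infty)$ that is an ensemble Z$_2$-frameness monotone, i.e. for every pure state $|\psi\rangle$ and every Z$_2$-invariant measurement $\{\mathcal{E}_\mu\}$ such that each outcome $\mu$ with $w_\mu:=\mathrm{Tr}\,\mathcal{E}_\mu(|\psi\rangle\langle\psi|)>0$ satisfies $\mathcal{E}_\mu(|\psi\rangle\langle\psi|)=w_\mu|\phi_\mu\rangle\langle\phi_\mu|$ for a pure state $|\phi_\mu\rangle$, one has $\sum_\mu w_\mu F(|\phi_\mu\rangle)\le F(|\psi\rangle)$. Then there is a non-decreasing concave function $f:[0,1]\to\mathbb{R}$ such that $F(|\psi\rangle)=f(\mathcal{C}(|\psi\rangle))$ for every pure state $|\psi\rangle\in\mathcal{H}'$.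
   Context: $\mathcal{H}'$ is a two-dimensional Hilbert space with orthonormal basis $|0\rangle,|1\rangle$; $\pi=|0\rangle\langle0|-|1\rangle\langle1|$. A Z$_2$-invariant operation is a completely positive, trace-nonincreasing linear map $\mathcal{E}$ on operators on $\mathcal{H}'$ with $\mathcal{E}(\pi X\pi)=\pi\mathcal{E}(X)\pi$ for all $X$. A Z$_2$-invariant measurement is a (countable) family $\{\mathcal{E}_\mu\}$ of Z$_2$-invariant operations whose sum is trace-preserving. For a pure state $|\chi\rangle$, $\mathcal{C}(|\chi\rangle)=2\min\{|\langle0|\chi\rangle|^2,|\langle1|\chi\rangle|^2\}\in[0,1]$. *)

From mathcomp Require Import all_boot all_algebra.
From mathcomp Require Import classical_sets reals topology normedtype sequences.
From mathcomp Require Export complex.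
Import GRing.Theory Num.Theory numFieldNormedType.Exports.
Local Open Scope ring_scope.
Local Open Scope classical_set_scope.

Set Implicit Arguments.
Unset Strict Implicit.
Unset Printing Implicit Defensive.

Section Defs.
Variable R : realType.
Local Notation C := R[i].
Local Notation mat := 'M[C]_2.
Local Notation vec := 'cV[C]_2.

Definition ofR (x : R) : C := Complex x 0.

Definition psdk (T : finType) (A : T -> T -> C) : Prop :=
  forall v : T -> C, 0 <= \sum_i \sum_j (Num.conj (v i)) * A i j * v j.

Definition psd (A : mat) : Prop := psdk (fun i j => A i j).

Definition is_linear_map (E : mat -> mat) : Prop :=
  forall (a : C) (X Y : mat), E (a *: X + Y) = a *: E X + E Y.

(* id_n (x) E acting on operators on C^n (x) H', written as kernels on
   'I_n * 'I_2 : E is applied to each 2x2 block *)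
Definition ampl (n : nat) (E : mat -> mat)
  (X : 'I_n * 'I_2 -> 'I_n * 'I_2 -> C) : 'I_n * 'I_2 -> 'I_n * 'I_2 -> C :=
  fun p q => E (\matrix_(k, l) X (p.1, k) (q.1, l)) p.2 q.2.

Definition completely_positive (E : mat -> mat) : Prop :=
  forall (n : nat) (X : 'I_n * 'I_2 -> 'I_n * 'I_2 -> C),
    psdk X -> psdk (ampl E X).

Definition trace_nonincreasing (E : mat -> mat) : Prop :=
  forall X : mat, psd X -> \tr (E X) <= \tr X.

Definition operation (E : mat -> mat) : Prop :=
  [/\ is_linear_map E, completely_positive E & trace_nonincreasing E].

Definition piZ : mat := \matrix_(i, j)
  (if i == j then (if i == ord0 then 1 else -1) else 0).

Definition Z2_invariant (E : mat -> mat) : Prop :=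
  forall X : mat, E (piZ *m X *m piZ) = piZ *m E X *m piZ.

Definition Z2_operation (E : mat -> mat) : Prop :=
  operation E /\ Z2_invariant E.

(* A countable family of operations indexed by nat (finite families are
   padded by the zero operation) whose sum is trace preserving. *)
Definition Z2_measurement (E : nat -> mat -> mat) : Prop :=
  (forall mu, Z2_operation (E mu)) /\
  (forall X : mat, psd X ->
     (fun N : nat => \sum_(mu < N) complex.Re (\tr (E mu X))) @ \oo
       --> (complex.Re (\tr X) : R^o)).

Definition bra (v : vec) : 'rV[C]_2 := map_mx Num.conj v^T.
Definition proj (v : vec) : mat := v *m bra v.
Definition pure (v : vec) : Prop := (bra v *m v) ord0 ord0 = 1.

Definition coh (v : vec) : R :=
  2 * Num.min (complex.Re (`|v ord0 ord0| ^+ 2))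
              (complex.Re (`|v ord_max ord0| ^+ 2)).

Definition weight (E : nat -> mat -> mat) (mu : nat) (psi : vec) : R :=
  complex.Re (\tr (E mu (proj psi))).

Definition in01 (x : R) : Prop := 0 <= x <= 1.

Definition nondecreasing01 (f : R -> R) : Prop :=
  forall x y, in01 x -> in01 y -> x <= y -> f x <= f y.

Definition concave01 (f : R -> R) : Prop :=
  forall x y t, in01 x -> in01 y -> in01 t ->
    t * f x + (1 - t) * f y <= f (t * x + (1 - t) * y).

End Defs.

From mathcomp Require Import all_boot all_order all_algebra.
From mathcomp Require Import reals complex topology normedtype.
From mathcomp Require Import ring lra.
Import Order.TTheory GRing.Theory Num.Theory numFieldNormedType.Exports.

Set Implicit Arguments.
Unset Strict Implicit.
Unset Printing Implicit Defensive.

Local Open Scope complex_scope.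
Local Open Scope ring_scope.

(* Monotonicity is only used for measurements whose Kraus operators are
   monomial matrices diag(d) P^b, with P the swap of |0> and |1>: such a K
   satisfies pi K pi = +-K, so X |-> K X K^* is Z2-invariant.  Diagonal phases
   show that F(psi) only depends on p = |<0|psi>|^2, i.e. F(psi) = g(p) with
   g(p) = F(sqrt p |0> + sqrt (1 - p) |1>), and the swap gives g(1 - p) = g(p).
   For p = t x + (1 - t) y, the two Kraus operators
   diag(sqrt (t x_k / p_k)) and diag(sqrt ((1 - t) y_k / p_k)), where
   (p_0, p_1) = (p, 1 - p) and similarly for x and y, split the state of p
   into those of x and y with probabilities t and 1 - t, so g is concave.
   A concave function symmetric about 1/2 is nondecreasing on [0, 1/2], and
   C(psi) = 2 min(p, 1 - p), so f(c) = g(c / 2) works. *)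

Section ConcaveSymmetric.
Variable R : realType.
Implicit Types (g : R -> R) (t x y : R).

Lemma mix_gt0_lt1 t x y : 0 < t < 1 -> in01 x -> in01 y -> x != y ->
  0 < t * x + (1 - t) * y < 1.
Proof.
move=> /andP[t0 t1] /andP[x0 x1] /andP[y0 y1].
have t1' : 0 < 1 - t by rewrite subr_gt0.
case/lt_total/orP => lt_xy.
- have gap : 0 < y - x by rewrite subr_gt0.
  have := mulr_gt0 t0 gap; have := mulr_gt0 t1' gap.
  by move=> ? ?; apply/andP; split; lra.
- have gap : 0 < x - y by rewrite subr_gt0.
  have := mulr_gt0 t0 gap; have := mulr_gt0 t1' gap.
  by move=> ? ?; apply/andP; split; lra.
Qed.

Lemma concave01_of_interior g :
  (forall t x y, 0 < t < 1 -> in01 x -> in01 y -> 0 < t * x + (1 - t) * y < 1 ->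
     t * g x + (1 - t) * g y <= g (t * x + (1 - t) * y)) ->
  concave01 g.
Proof.
move=> g_conc x y t x01 y01 /andP[t0 t1].
have [->|t_neq0] := eqVneq t 0; first by rewrite !mul0r subr0 !mul1r !add0r.
have [->|t_neq1] := eqVneq t 1; first by rewrite subrr !mul0r !mul1r !addr0.
have [<-|x_neq_y] := eqVneq x y; first by rewrite -!mulrDl subrKC !mul1r.
have t01 : 0 < t < 1 by rewrite !lt_def t_neq0 eq_sym t_neq1 t0 t1.
exact/g_conc/mix_gt0_lt1.
Qed.

Lemma concave01_half g : concave01 g -> concave01 (fun c => g (c / 2)).
Proof.
move=> g_conc x y t /andP[x0 x1] /andP[y0 y1] t01 /=.
have -> : (t * x + (1 - t) * y) / 2 = t * (x / 2) + (1 - t) * (y / 2) by ring.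
by apply: g_conc t01; apply/andP; split; lra.
Qed.

Lemma nondecreasing01_half g :
  concave01 g -> (forall p, in01 p -> g (1 - p) = g p) ->
  nondecreasing01 (fun c => g (c / 2)).
Proof.
move=> g_conc g_sym x y /andP[x0 x1] /andP[y0 y1] le_xy /=.
have [x_eq1|x_neq1] := eqVneq x 1; first by have -> : y = x by lra.
have x_lt1 : 0 < 1 - x by rewrite subr_gt0 lt_neqAle x_neq1 x1.
have x2_01 : in01 (x / 2) by apply/andP; split; lra.
have x2'_01 : in01 (1 - x / 2) by apply/andP; split; lra.
(* y / 2 is a convex combination of x / 2 and of its mirror image 1 - x / 2 *)
pose t := (1 - x / 2 - y / 2) / (1 - x).
have t01 : in01 t.
  apply/andP; split; first by apply: divr_ge0; lra.
  by rewrite ler_pdivrMr // mul1r; lra.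
have mixE : t * (x / 2) + (1 - t) * (1 - x / 2) = y / 2.
  by rewrite /t; field; rewrite gt_eqF.
have := g_conc _ _ _ x2_01 x2'_01 t01.
by rewrite mixE g_sym // -mulrDl subrKC mul1r.
Qed.

End ConcaveSymmetric.

Section Qubit.
Variable R : realType.
Local Notation C := R[i].
Local Notation mat := 'M[C]_2.
Local Notation vec := 'cV[C]_2.
Implicit Types (d : 'I_2 -> C) (b : bool) (X : mat) (v : vec).

Lemma conjCM (x y : C) : (x * y)^* = x^* * y^*.
Proof. exact: rmorphM. Qed.

Lemma conj_realC (x : R) : (x%:C)^* = x%:C :> C.
Proof. exact: conjc_real. Qed.

Lemma ord2P (i : 'I_2) : i = ord0 \/ i = ord_max.
Proof. case: i => [[|[|k]] lt_i2]; [left|right|by []]; exact/val_inj. Qed.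

Lemma sum_ord2 (V : nmodType) (G : 'I_2 -> V) : \sum_i G i = G ord0 + G ord_max.
Proof. by rewrite big_ord_recr big_ord1; congr (G _ + _); exact/val_inj. Qed.

Definition flip b (i : 'I_2) : 'I_2 := if b then rev_ord i else i.

Lemma flipK b : involutive (flip b).
Proof. by case: b => i //; exact: rev_ordK. Qed.

Definition sgn (i : 'I_2) : C := if i == ord0 then 1 else -1.

Lemma sgn_flip b i j : sgn (flip b i) * sgn (flip b j) = sgn i * sgn j.
Proof.
by case: b; case: (ord2P i) => ->; case: (ord2P j) => ->; rewrite /sgn /=; ring.
Qed.

Lemma piZ_conjE X i j : (piZ R *m X *m piZ R) i j = sgn i * X i j * sgn j.
Proof.
rewrite !mxE !sum_ord2 !mxE !sum_ord2 !mxE.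
by case: (ord2P i) => ->; case: (ord2P j) => ->; rewrite /sgn /=; ring.
Qed.

(* X |-> K X K^* with K = diag(d) P^b. *)
Definition monomial_map d b X : mat :=
  \matrix_(i, j) (d i * X (flip b i) (flip b j) * (d j)^*).

Definition monomial_vec d b v : vec := \col_i (d i * v (flip b i) ord0).

Lemma monomial_map_linear d b : is_linear_map (monomial_map d b).
Proof. by move=> a X Y; apply/matrixP => i j; rewrite !mxE; ring. Qed.

Lemma monomial_map_cp d b : completely_positive (monomial_map d b).
Proof.
move=> n X X_psd v.
pose g (p : 'I_n * 'I_2) := (p.1, flip b p.2).
have gK : involutive g by case=> a k; rewrite /g /= flipK.
have := X_psd (fun p => (d (flip b p.2))^* * v (g p)).
congr (0 <= _).
rewrite (reindex_inj (inv_inj gK)); apply: eq_bigr => -[a k] _.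
rewrite (reindex_inj (inv_inj gK)); apply: eq_bigr => -[c l] _.
by rewrite /g /ampl /= !flipK !mxE /= !conjCM conjCK; ring.
Qed.

Lemma monomial_map_Z2 d b : Z2_invariant (monomial_map d b).
Proof.
move=> X; apply/matrixP => i j.
rewrite piZ_conjE [in LHS]mxE piZ_conjE mxE.
transitivity (sgn (flip b i) * sgn (flip b j) *
              (d i * X (flip b i) (flip b j) * (d j)^*)); first ring.
by rewrite sgn_flip; ring.
Qed.

Lemma psd_diag_ge0 X i : psd X -> 0 <= X i i.
Proof.
move=> X_psd; have := X_psd (fun k => (k == i)%:R).
rewrite !sum_ord2; case: (ord2P i) => -> /=.
  by rewrite !(rmorph0, rmorph1, mul0r, mulr0, mul1r, mulr1, addr0).
by rewrite !(rmorph0, rmorph1, mul0r, mulr0, mul1r, mulr1, add0r).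
Qed.

Lemma mxtrace_monomial_map d b X :
  \tr (monomial_map d b X) = \sum_i d (flip b i) * (d (flip b i))^* * X i i.
Proof.
rewrite /mxtrace (reindex_inj (inv_inj (flipK b))).
by apply: eq_bigr => i _; rewrite mxE flipK; ring.
Qed.

Lemma monomial_map_Z2_operation d b :
  (forall i, d i * (d i)^* <= 1) -> Z2_operation (monomial_map d b).
Proof.
move=> d_le1; split; last exact: monomial_map_Z2.
split; [exact: monomial_map_linear | exact: monomial_map_cp |].
move=> X X_psd; rewrite mxtrace_monomial_map.
by apply: ler_sum => i _; apply: ler_piMl; [exact: psd_diag_ge0 | exact: d_le1].
Qed.

Definition complete_pair d0 d1 := forall i, d0 i * (d0 i)^* + d1 i * (d1 i)^* = 1.

Definition two_outcome d0 d1 b : nat -> mat -> mat :=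
  fun mu => monomial_map (nth (fun=> 0) [:: d0; d1] mu) b.

Lemma monomial_map0 b X : monomial_map (fun=> 0) b X = 0.
Proof. by apply/matrixP => i j; rewrite !mxE !mul0r. Qed.

Lemma two_outcome_Z2_measurement d0 d1 b :
  complete_pair d0 d1 -> Z2_measurement (two_outcome d0 d1 b).
Proof.
move=> d_complete; split.
  move=> [|[|mu]]; apply: monomial_map_Z2_operation => i /=.
  - by rewrite -(d_complete i) lerDl mul_conjC_ge0.
  - by rewrite -(d_complete i) lerDr mul_conjC_ge0.
  - by rewrite nth_nil mul0r ler01.
move=> X _; apply: cvg_near_cst; exists 2%N => // N /= le2N.
rewrite -(subnKC le2N) big_split_ord /= [X in _ + X]big1 => [|mu _]; last first.
  by rewrite /two_outcome nth_default ?monomial_map0 ?mxtrace0 //= leq_addr.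
rewrite !big_ord_recr big_ord0 /= add0r addr0 -raddfD /=.
rewrite /two_outcome /= !mxtrace_monomial_map -big_split /=.
by congr complex.Re; apply: eq_bigr => i _; rewrite -mulrDl d_complete mul1r.
Qed.

Lemma projE v i j : proj v i j = v i ord0 * (v j ord0)^*.
Proof. by rewrite /proj mxE big_ord1 !mxE. Qed.

Lemma pureE v : pure v <-> \sum_i v i ord0 * (v i ord0)^* = 1.
Proof.
rewrite /pure mxE (eq_bigr (fun i => v i ord0 * (v i ord0)^*)) // => i _.
by rewrite !mxE mulrC.
Qed.

Lemma mxtrace_proj v : pure v -> \tr (proj v) = 1.
Proof. by move/pureE <-; apply: eq_bigr => i _; rewrite projE. Qed.

Lemma projZ (c : C) v : proj (c *: v) = (c * c^*) *: proj v.
Proof. by apply/matrixP => i j; rewrite projE [RHS]mxE projE !mxE conjCM; ring. Qed.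

Lemma monomial_map_proj d b v :
  monomial_map d b (proj v) = proj (monomial_vec d b v).
Proof. by apply/matrixP => i j; rewrite mxE !projE !mxE conjCM; ring. Qed.

Lemma pure_monomial_vec d b v :
  (forall i, d i * (d i)^* = 1) -> pure v -> pure (monomial_vec d b v).
Proof.
move=> d_unit /pureE v_pure; apply/pureE.
rewrite -v_pure (reindex_inj (inv_inj (flipK b))); apply: eq_bigr => i _.
rewrite !mxE flipK conjCM.
transitivity (d (flip b i) * (d (flip b i))^* * (v i ord0 * (v i ord0)^*)).
  by ring.
by rewrite d_unit mul1r.
Qed.

Definition bern (p : R) (i : 'I_2) : R := if i == ord0 then p else 1 - p.

Definition sqrt_state (p : R) : vec := \col_i (Num.sqrt (bern p i))%:C.

Lemma bern_ge0 p i : in01 p -> 0 <= bern p i.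
Proof. by case/andP=> p0 p1; rewrite /bern; case: ifP => _; lra. Qed.

Lemma bern_gt0 p i : 0 < p < 1 -> 0 < bern p i.
Proof. by case/andP=> p0 p1; rewrite /bern; case: ifP => _; lra. Qed.

Lemma bern_mix t x y i :
  bern (t * x + (1 - t) * y) i = t * bern x i + (1 - t) * bern y i.
Proof. by rewrite /bern; case: ifP => _; ring. Qed.

Lemma bern_onem p i : bern (1 - p) i = bern p (flip true i).
Proof. by case: (ord2P i) => ->; rewrite /bern //= subKr. Qed.

Lemma sqrtC_mul_conj (a : R) : 0 <= a -> (Num.sqrt a)%:C * ((Num.sqrt a)%:C)^* = a%:C.
Proof. by move=> a0; rewrite conj_realC -rmorphM -expr2 sqr_sqrtr. Qed.

Lemma pure_sqrt_state p : in01 p -> pure (sqrt_state p).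
Proof.
move=> p01; apply/pureE.
rewrite (eq_bigr (fun i => (bern p i)%:C)) => [|i _]; last first.
  by rewrite mxE sqrtC_mul_conj // bern_ge0.
by rewrite -rmorph_sum sum_ord2 /bern /= subrKC.
Qed.

Definition pop v i : R := complex.Re (`|v i ord0| ^+ 2).

Lemma popE v i :
  pop v i = complex.Re (v i ord0) ^+ 2 + complex.Im (v i ord0) ^+ 2.
Proof. by rewrite /pop normc_def -rmorphXn /= sqr_sqrtr // addr_ge0 ?sqr_ge0. Qed.

Lemma pop_ge0 v i : 0 <= pop v i.
Proof. by rewrite popE addr_ge0 ?sqr_ge0. Qed.

Lemma normC_pop v i : `|v i ord0| = (Num.sqrt (pop v i))%:C.
Proof. by rewrite popE normc_def. Qed.

Lemma sum_pop v : pure v -> pop v ord0 + pop v ord_max = 1.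
Proof.
move/pureE => v_pure; rewrite -sum_ord2 -raddf_sum.
by under eq_bigr do rewrite normCK; rewrite v_pure.
Qed.

Lemma pop01 v : pure v -> in01 (pop v ord0).
Proof.
move/sum_pop; have := pop_ge0 v ord0; have := pop_ge0 v ord_max.
by move=> ? ? ?; apply/andP; split; lra.
Qed.

Lemma pop_bern v i : pure v -> pop v i = bern (pop v ord0) i.
Proof. by move/sum_pop; case: (ord2P i) => -> //= ?; rewrite /bern /=; lra. Qed.

Definition phase (z : C) : C := if z == 0 then 1 else z / `|z|.

Lemma phase_unit z : phase z * (phase z)^* = 1.
Proof.
rewrite -normCK /phase; case: eqP => [_|/eqP z_neq0]; first by rewrite normr1 expr1n.
by rewrite normf_div normr_id divff ?expr1n // normr_eq0.
Qed.

Lemma phase_mul_norm z : phase z * `|z| = z.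
Proof.
rewrite /phase; case: eqP => [->|/eqP z_neq0]; first by rewrite normr0 mulr0.
by rewrite divfK // normr_eq0.
Qed.

Lemma conj_phase_mul z : (phase z)^* * z = `|z|.
Proof. by rewrite -{2}(phase_mul_norm z) mulrA (mulrC _^*) phase_unit mul1r. Qed.

Definition ensemble_monotone (F : vec -> R) : Prop :=
  forall (psi : vec) (E : nat -> mat -> mat) (phi : nat -> vec),
    pure psi -> Z2_measurement E ->
    (forall mu, 0 < weight E mu psi ->
       pure (phi mu) /\ E mu (proj psi) = ofR (weight E mu psi) *: proj (phi mu)) ->
    forall N : nat,
      \sum_(mu < N | 0 < weight E mu psi) weight E mu psi * F (phi mu) <= F psi.

Section EnsembleMonotone.
Variable F : vec -> R.
Hypothesis F_mono : ensemble_monotone F.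

Lemma two_outcome_monotone d0 d1 b psi phi0 phi1 (c0 c1 : R) :
  complete_pair d0 d1 -> pure psi -> pure phi0 -> pure phi1 ->
  monomial_vec d0 b psi = c0%:C *: phi0 ->
  monomial_vec d1 b psi = c1%:C *: phi1 ->
  c0 ^+ 2 * F phi0 + c1 ^+ 2 * F phi1 <= F psi.
Proof.
move=> d_complete psi_pure phi0_pure phi1_pure out0 out1.
pose E := two_outcome d0 d1 b.
have proj_out d c phi : monomial_vec d b psi = c%:C *: phi ->
    monomial_map d b (proj psi) = (c ^+ 2)%:C *: proj phi.
  by move=> out; rewrite monomial_map_proj out projZ conj_realC -rmorphM -expr2.
have weight_out mu c phi : pure phi ->
    E mu (proj psi) = (c ^+ 2)%:C *: proj phi -> weight E mu psi = c ^+ 2.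
  by move=> phi_pure out; rewrite /weight out mxtraceZ mxtrace_proj // mulr1.
have E0 := proj_out _ _ _ out0; have E1 := proj_out _ _ _ out1.
have w0 := weight_out 0%N _ _ phi0_pure E0.
have w1 := weight_out 1%N _ _ phi1_pure E1.
have w2 mu : weight E mu.+2 psi = 0.
  by rewrite /weight /E /two_outcome /= nth_nil monomial_map0 mxtrace0.
have drop_if (w x : R) : 0 <= w -> (if 0 < w then w * x else 0) = w * x.
  by rewrite le_eqVlt => /predU1P[<-|->]; rewrite ?ltxx ?mul0r.
have := @F_mono psi E (fun mu => if mu == 0%N then phi0 else phi1) psi_pure
  (two_outcome_Z2_measurement b d_complete) _ 2.
rewrite big_mkcond !big_ord_recr big_ord0 /= add0r w0 w1 !drop_if ?sqr_ge0 //.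
apply; case=> [|[|mu]] /=; rewrite ?w0 ?w1 ?w2 ?ltxx // => _; by split.
Qed.

Lemma monomial_unitary_monotone d b psi :
  (forall i, d i * (d i)^* = 1) -> pure psi -> F (monomial_vec d b psi) <= F psi.
Proof.
move=> d_unit psi_pure.
have := @two_outcome_monotone d (fun=> 0) b psi (monomial_vec d b psi) psi 1 0.
rewrite expr1n expr0n mul1r mul0r addr0; apply => //.
- by move=> i; rewrite d_unit mul0r addr0.
- exact: pure_monomial_vec.
- by rewrite rmorph1 scale1r.
- by rewrite rmorph0 scale0r; apply/matrixP => i j; rewrite !mxE mul0r.
Qed.

Lemma F_sqrt_state_pop psi : pure psi -> F psi = F (sqrt_state (pop psi ord0)).
Proof.
move=> psi_pure; have st_pure := pure_sqrt_state (pop01 psi_pure).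
have stE : sqrt_state (pop psi ord0) =
           monomial_vec (fun i => (phase (psi i ord0))^*) false psi.
  by apply/matrixP => i j; rewrite !mxE /= conj_phase_mul normC_pop -pop_bern.
have psiE : psi =
            monomial_vec (fun i => phase (psi i ord0)) false (sqrt_state (pop psi ord0)).
  by apply/matrixP => i j; rewrite (ord1 j) !mxE /= -pop_bern // -normC_pop phase_mul_norm.
apply/le_anti/andP; split.
  by rewrite {1}psiE; apply: monomial_unitary_monotone st_pure => i; exact: phase_unit.
rewrite stE; apply: monomial_unitary_monotone psi_pure => i.
by rewrite conjCK mulrC phase_unit.
Qed.

Lemma F_sqrt_state_sym p : in01 p -> F (sqrt_state (1 - p)) = F (sqrt_state p).
Proof.
have swapE q : sqrt_state (1 - q) = monomial_vec (fun=> 1) true (sqrt_state q).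
  by apply/matrixP => i j; rewrite !mxE mul1r bern_onem.
have one_unit (i : 'I_2) : 1 * 1^* = 1 :> C by rewrite conjC1 mulr1.
move=> p01; have p'01 : in01 (1 - p) by case/andP: p01 => ? ?; apply/andP; split; lra.
apply/le_anti/andP; split.
  by rewrite swapE; apply: monomial_unitary_monotone (pure_sqrt_state p01).
rewrite -[in F (sqrt_state p)](subKr 1 p) swapE.
exact: monomial_unitary_monotone (pure_sqrt_state p'01).
Qed.

Lemma F_sqrt_state_concave : concave01 (fun p => F (sqrt_state p)).
Proof.
apply: concave01_of_interior => t x y /andP[t0 t1] x01 y01 p01.
have t_ge0 : 0 <= t by exact: ltW.
have t'_ge0 : 0 <= 1 - t by rewrite subr_ge0 ltW.
set p := t * x + (1 - t) * y in p01 *.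
have p01' : in01 p by case/andP: p01 => ? ?; apply/andP; split; lra.
have bp_gt0 i : 0 < bern p i := bern_gt0 i p01.
have ratio_ge0 s q i : 0 <= s -> in01 q -> 0 <= s * bern q i / bern p i.
  by move=> s0 q01; rewrite divr_ge0 ?mulr_ge0 ?bern_ge0 ?(ltW (bp_gt0 i)).
pose kraus s q i := (Num.sqrt (s * bern q i / bern p i))%:C.
have kraus_out s q : 0 <= s -> in01 q ->
    monomial_vec (kraus s q) false (sqrt_state p) = (Num.sqrt s)%:C *: sqrt_state q.
  move=> s0 q01; apply/matrixP => i j; rewrite !mxE -!rmorphM /=.
  by rewrite -sqrtrM ?ratio_ge0 // divfK ?gt_eqF // sqrtrM.
have complete : complete_pair (kraus t x) (kraus (1 - t) y).
  move=> i; rewrite !sqrtC_mul_conj ?ratio_ge0 //.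
  by rewrite -rmorphD -mulrDl -bern_mix divff ?gt_eqF.
have := two_outcome_monotone complete (pure_sqrt_state p01')
  (pure_sqrt_state x01) (pure_sqrt_state y01)
  (kraus_out t x t_ge0 x01) (kraus_out (1 - t) y t'_ge0 y01).
by rewrite !sqr_sqrtr.
Qed.

End EnsembleMonotone.

End Qubit.

Theorem theorem12 (R : realType) (F : 'cV[R[i]]_2 -> R) :
  (forall psi, pure psi -> 0 <= F psi) ->
  (forall (psi : 'cV[R[i]]_2) (E : nat -> 'M[R[i]]_2 -> 'M[R[i]]_2)
          (phi : nat -> 'cV[R[i]]_2),
     pure psi -> Z2_measurement E ->
     (forall mu, 0 < weight E mu psi ->
        pure (phi mu) /\
        E mu (proj psi) = ofR (weight E mu psi) *: proj (phi mu)) ->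
     forall N : nat,
       \sum_(mu < N | 0 < weight E mu psi) weight E mu psi * F (phi mu)
         <= F psi) ->
  exists f : R -> R,
    [/\ nondecreasing01 f, concave01 f &
        forall psi, pure psi -> F psi = f (coh psi)].
Proof.
move=> _ F_mono.
pose g p := F (sqrt_state p).
have g_conc : concave01 g := F_sqrt_state_concave F_mono.
have g_sym : forall p, in01 p -> g (1 - p) = g p := F_sqrt_state_sym F_mono.
exists (fun c => g (c / 2)); split.
- exact: nondecreasing01_half.
- exact: concave01_half.
- move=> psi psi_pure; rewrite (F_sqrt_state_pop F_mono psi_pure) /coh.
  rewrite -/(pop psi ord0) -/(pop psi ord_max) (pop_bern ord_max psi_pure).
  rewrite mulrC mulKf ?pnatr_eq0 // /bern /=.
  have p01 := pop01 psi_pure.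
  by case: leP => _ //; rewrite g_sym.
Qed.
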